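(* Let $S$ and $T$ be finite sets and let $L:\{0,1\}^S\to\{0,1\}$ be a monotone Boolean function. Let $\psi:S\to T$ be a function such that $$|\psi(A)|=|A|\quad\text{for every minimal one-set } A \text{ of } L.$$ Let $X=(X(i))_{i\in S}$ and $Y=(Y(j))_{j\in T}$ be i.i.d. collections of Boolean random variables with intensity $p\in[0,1]$. Then $$\mathbb P[L(Y\circ\psi)=1]\leq \mathbb P[L(X)=1].$$ Similarly, if $|\psi(Z)|=|Z|$ for every minimal zero-set $Z$ of $L$, then $\mathbb P[L(Y\circ\psi)=1]\geq \mathbb P[L(X)=1]$.
   Context: - $L$ is monotone if $x\leq y$ pointwise implies $L(x)\leq L(y)$. - A one-set of $L$ is a set $A\subset S$ with $L(1_A)=1$; a zero-set is a set $Z\subset S$ with $L(1-1_Z)=0$. A one-set (zero-set) is minimal if it contains no other one-set (zero-set) as a proper subset. - ''I.i.d. with intensity $p$'' means independent with $\mathbb P[X(i)=1]=p$. - $(Y\circ\psi)(i)=Y(\psi(i))$ for $i\in S$. *)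

From mathcomp Require Import all_boot all_order all_algebra.
Set Implicit Arguments. Unset Strict Implicit. Unset Printing Implicit Defensive.
Import Order.TTheory GRing.Theory Num.Theory.
Local Open Scope ring_scope.

Definition monotone (S : finType) (L : {ffun S -> bool} -> bool) : Prop :=
  forall x y : {ffun S -> bool}, (forall i, x i <= y i)%N -> (L x <= L y)%N.

Definition ind (S : finType) (A : {set S}) : {ffun S -> bool} := [ffun i => i \in A].
Definition coind (S : finType) (Z : {set S}) : {ffun S -> bool} := [ffun i => i \notin Z].

Definition one_set (S : finType) (L : {ffun S -> bool} -> bool) (A : {set S}) : Prop :=
  L (ind A) = true.
Definition zero_set (S : finType) (L : {ffun S -> bool} -> bool) (Z : {set S}) : Prop :=
  L (coind Z) = false.

Definition minimal_one_set (S : finType) (L : {ffun S -> bool} -> bool) (A : {set S}) : Prop :=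
  one_set L A /\ forall B : {set S}, B \proper A -> ~ one_set L B.
Definition minimal_zero_set (S : finType) (L : {ffun S -> bool} -> bool) (Z : {set S}) : Prop :=
  zero_set L Z /\ forall B : {set S}, B \proper Z -> ~ zero_set L B.

(* Law of an i.i.d. Bernoulli(p) family indexed by a finite set I:
   P[X = x] = prod_i (p if x i else 1 - p). *)
Definition bern_weight (R : pzRingType) (I : finType) (p : R) (x : {ffun I -> bool}) : R :=
  \prod_(i : I) (if x i then p else 1 - p).

Definition iid_prob (R : pzRingType) (I : finType) (p : R) (E : {ffun I -> bool} -> bool) : R :=
  \sum_(x : {ffun I -> bool} | E x) bern_weight p x.

Definition compose_conf (S T : finType) (psi : S -> T) (y : {ffun T -> bool}) : {ffun S -> bool} :=
  [ffun i => y (psi i)].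

(* Put X and Y side by side as one i.i.d. family indexed by S + T.  For U a
   subset of S, let F(U) be the probability that L holds when every i in U reads
   its own variable X(i) and every other i reads Y(psi i); then F(set0) is the
   left-hand side and F(setT) the right-hand side.  Removing j from U identifies
   the variable of j with that of psi j, and identifying two independent
   Bernoulli(p) coordinates a, b lowers the expectation of H by
   p(1-p) E[H(0,1) + H(1,0) - H(1,1) - H(0,0)].  For the indicator of L this is
   nonnegative: a minimal one-set below the (1,1) configuration contains j or
   some i with psi i = psi j, never both since psi is injective on it, so
   L(1,1) forces L(0,1) or L(1,0).  Hence F(set0) <= F(setT).  The zero-set
   half is the one-set half for the dual function x |-> ~~ L (~~ x) at
   intensity 1 - p. *)

From mathcomp Require Import all_boot all_order all_algebra.
From mathcomp Require Import ring.
Set Implicit Arguments. Unset Strict Implicit. Unset Printing Implicit Defensive.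
Import Order.TTheory GRing.Theory Num.Theory.
Local Open Scope ring_scope.

Definition upd (V : finType) (y : {ffun V -> bool}) (c : V) (t : bool) : {ffun V -> bool} :=
  [ffun v => if v == c then t else y v].

Section Update.
Variables (V : finType) (y : {ffun V -> bool}).

Lemma upd_upd c s t : upd (upd y c s) c t = upd y c t.
Proof. by apply/ffunP => v; rewrite !ffunE; case: eqP. Qed.

Lemma upd_id c : upd y c (y c) = y.
Proof. by apply/ffunP => v; rewrite !ffunE; case: eqP => // ->. Qed.

Lemma updC a b s t : a != b -> upd (upd y a s) b t = upd (upd y b t) a s.
Proof.
move=> ab; apply/ffunP => v; rewrite !ffunE.
by case: (eqVneq v a) => [->|//]; rewrite (negPf ab).
Qed.

End Update.

Lemma sum_ffun_bool_coord (V : finType) (M : nmodType) (c : V) (G : {ffun V -> bool} -> M) :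
  \sum_y G y = \sum_(y : {ffun V -> bool} | ~~ y c) (G (upd y c true) + G (upd y c false)).
Proof.
have flipK : involutive (fun y : {ffun V -> bool} => upd y c (~~ y c)).
  by move=> y; rewrite upd_upd ffunE eqxx negbK upd_id.
rewrite (bigID (fun y : {ffun V -> bool} => y c)) /= addrC big_split /= addrC.
congr (_ + _); last by apply: eq_bigr => y /negPf yc; rewrite -yc upd_id.
rewrite (reindex_inj (inv_inj flipK)) /=; apply: eq_big => y.
  by rewrite ffunE eqxx.
by rewrite ffunE eqxx => /negPf ->.
Qed.

Definition negc (I : finType) (x : {ffun I -> bool}) : {ffun I -> bool} := [ffun i => ~~ x i].

Definition dual (I : finType) (E : {ffun I -> bool} -> bool) (x : {ffun I -> bool}) : bool :=
  ~~ E (negc x).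

Lemma negcK (I : finType) : involutive (@negc I).
Proof. by move=> x; apply/ffunP => i; rewrite !ffunE negbK. Qed.

Section Expectation.
Variables (R : comPzRingType) (p : R).

Definition bern (b : bool) : R := if b then p else 1 - p.

Definition expect (V : finType) (H : {ffun V -> bool} -> R) : R :=
  \sum_y bern_weight p y * H y.

Lemma iid_probE (V : finType) (E : {ffun V -> bool} -> bool) :
  iid_prob p E = expect (fun x => (E x)%:R).
Proof.
rewrite /iid_prob /expect big_mkcond; apply: eq_bigr => x _.
by case: (E x); rewrite ?mulr1 ?mulr0.
Qed.

Lemma expectD (V : finType) (H1 H2 : {ffun V -> bool} -> R) :
  expect (fun y => H1 y + H2 y) = expect H1 + expect H2.
Proof. by rewrite /expect -big_split; apply: eq_bigr => y _; rewrite mulrDr. Qed.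

Lemma expectN (V : finType) (H : {ffun V -> bool} -> R) :
  expect (fun y => - H y) = - expect H.
Proof. by rewrite /expect -sumrN; apply: eq_bigr => y _; rewrite mulrN. Qed.

Lemma bern_weight_upd (V : finType) (y : {ffun V -> bool}) c t :
  bern_weight p (upd y c t) = bern t * \prod_(i | i != c) bern (y i).
Proof.
rewrite /bern_weight (bigD1 c) //= ffunE eqxx; congr (_ * _).
by apply: eq_bigr => i /negPf ic; rewrite ffunE ic.
Qed.

Lemma bernD : bern true + bern false = 1.
Proof. exact: subrKC. Qed.

Lemma expect_cond (V : finType) (c : V) (K : {ffun V -> bool} -> R) :
  expect K = p * expect (fun y => K (upd y c true))
           + (1 - p) * expect (fun y => K (upd y c false)).
Proof.
pose W (y : {ffun V -> bool}) := \prod_(i | i != c) bern (y i).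
have condE t : expect (fun y => K (upd y c t))
             = \sum_(y : {ffun V -> bool} | ~~ y c) W y * K (upd y c t).
  rewrite /expect (sum_ffun_bool_coord c); apply: eq_bigr => y _.
  by rewrite !bern_weight_upd !upd_upd -!mulrDl bernD mul1r.
rewrite !condE !mulr_sumr -big_split /expect (sum_ffun_bool_coord c) /=.
by apply: eq_bigr => y _; rewrite !bern_weight_upd /W !mulrA.
Qed.

Lemma expect_merge_gap (V : finType) (a b : V) (H : {ffun V -> bool} -> R) : a != b ->
  expect H - expect (fun y => H (upd y b (y a)))
  = p * (1 - p) * expect (fun y =>
      H (upd (upd y b false) a true) + H (upd (upd y b true) a false)
      - H (upd (upd y b true) a true) - H (upd (upd y b false) a false)).
Proof.
move=> ab; rewrite (expect_cond a H) (expect_cond b (fun y => H (upd y a true))).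
rewrite (expect_cond b (fun y => H (upd y a false))) (expect_cond a (fun y => H (upd y b (y a)))).
have mergedE t : expect (fun y => H (upd (upd y a t) b (upd y a t a)))
               = expect (fun y => H (upd (upd y b t) a t)).
  by apply: eq_bigr => y _; rewrite ffunE eqxx updC.
rewrite !mergedE !expectD !expectN; ring.
Qed.

Lemma sum_bern_weight_fiber (V W : finType) (f : V -> W)
    (x : {ffun V -> bool}) : injective f ->
  \sum_(y | compose_conf f y == x) bern_weight p y = bern_weight p x.
Proof.
move=> finj; pose Q (w : W) (b : bool) := [forall v, (f v == w) ==> (b == x v)].
rewrite (eq_bigl (fun y => y \in family Q)); last first.
  move=> y /=; apply/eqP/familyP => [yx w|fam].
    by apply/forallP => v; apply/implyP => /eqP <-; rewrite -yx ffunE.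
  by apply/ffunP => v; rewrite ffunE; move: (fam (f v)) => /forallP/(_ v); rewrite eqxx => /eqP.
rewrite /bern_weight -(bigA_distr_big_dep Q (fun _ b => if b then p else 1 - p)).
rewrite (bigID (mem (f @: [set: V]))) /= [X in _ * X]big1 ?mulr1; last first.
  move=> w wf; rewrite (eq_bigl xpredT) ?big_bool /= ?subrKC // => b.
  by apply/forallP => v; apply/implyP => /eqP fvw; move: wf; rewrite -fvw imset_f.
rewrite big_imset /=; last by move=> ? ? _ _; apply: finj.
apply: eq_big => [v|v _]; first by rewrite inE.
rewrite (eq_bigl (pred1 (x v))) ?big_pred1_eq // => b.
apply/forallP/eqP => [/(_ v)|-> v']; first by rewrite eqxx => /eqP.
by apply/implyP => /eqP/finj ->.
Qed.

Lemma expect_comp_inj (V W : finType) (f : V -> W)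
    (H : {ffun V -> bool} -> R) :
  injective f -> expect (fun y => H (compose_conf f y)) = expect H.
Proof.
move=> finj; rewrite /expect (partition_big (compose_conf f) xpredT) //=.
apply: eq_bigr => x _; rewrite -(sum_bern_weight_fiber x finj) mulr_suml.
by apply: eq_bigr => y /eqP <-.
Qed.

Lemma sum_bern_weight (I : finType) : \sum_(x : {ffun I -> bool}) bern_weight p x = 1.
Proof.
rewrite /bern_weight -(bigA_distr_bigA (fun _ (b : bool) => if b then p else 1 - p)) /=.
by rewrite big1 // => i _; rewrite big_bool /= subrKC.
Qed.

Lemma bern_weight_negc (I : finType) (x : {ffun I -> bool}) :
  bern_weight (1 - p) (negc x) = bern_weight p x.
Proof. by apply: eq_bigr => i _; rewrite ffunE; case: (x i); rewrite //= subKr. Qed.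

Lemma iid_prob_dual (I : finType) (E : {ffun I -> bool} -> bool) :
  iid_prob (1 - p) (dual E) = 1 - iid_prob p E.
Proof.
rewrite /iid_prob (reindex_inj (can_inj (@negcK I))) /=.
under eq_bigl do rewrite /dual negcK.
under eq_bigr do rewrite bern_weight_negc.
by rewrite -(sum_bern_weight I) [X in X - _](bigID E) /= addrAC subrr add0r.
Qed.

End Expectation.

Section ExpectationOrder.
Variables (R : numDomainType) (p : R).
Hypotheses (p_ge0 : 0 <= p) (p_le1 : p <= 1).

Lemma bern_weight_ge0 (V : finType) (y : {ffun V -> bool}) : 0 <= bern_weight p y.
Proof. by apply: prodr_ge0 => i _; case: (y i); rewrite ?subr_ge0. Qed.

Lemma expect_ge0 (V : finType) (H : {ffun V -> bool} -> R) :
  (forall y, 0 <= H y) -> 0 <= expect p H.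
Proof. by move=> H_ge0; apply: sumr_ge0 => y _; rewrite mulr_ge0 ?bern_weight_ge0. Qed.

Lemma expect_merge_le (V : finType) (a b : V) (H : {ffun V -> bool} -> R) : a != b ->
  (forall y, H (upd (upd y b true) a true) + H (upd (upd y b false) a false)
             <= H (upd (upd y b false) a true) + H (upd (upd y b true) a false)) ->
  expect p (fun y => H (upd y b (y a))) <= expect p H.
Proof.
move=> ab Hsub; rewrite -subr_ge0 expect_merge_gap //.
rewrite mulr_ge0 ?mulr_ge0 ?subr_ge0 // expect_ge0 // => y.
by rewrite -addrA -opprD subr_ge0; exact: Hsub.
Qed.

End ExpectationOrder.

Section MonotoneBooleanFunction.
Variables (S T : finType) (L : {ffun S -> bool} -> bool) (psi : S -> T).
Hypothesis monoL : monotone L.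
Hypothesis psi_inj_one : forall A : {set S}, minimal_one_set L A -> #|psi @: A| = #|A|.

Lemma monotone_true (x y : {ffun S -> bool}) : (forall i, x i <= y i)%N -> L x -> L y.
Proof. by move=> /monoL; case: (L x); case: (L y). Qed.

Lemma exists_minimal_one_set (x : {ffun S -> bool}) : L x ->
  exists2 A, minimal_one_set L A & A \subset [set i | x i].
Proof.
move=> Lx; have Lind : L (ind [set i | x i]).
  by rewrite (_ : ind _ = x) //; apply/ffunP => i; rewrite !ffunE inE.
have [A /minsetP [LA minA] Ax] := @minset_exists _ (fun B => L (ind B)) _ Lind.
by exists A => //; split=> // B BA LB; move: (BA); rewrite (minA B LB (proper_sub BA)) properxx.
Qed.

Definition pin (c : {ffun S -> bool}) (j : S) (B : {set S}) (s t : bool) : {ffun S -> bool} :=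
  [ffun i => if i == j then s else if i \in B then t else c i].

Lemma pin_mono c j (B : {set S}) (s t s' t' : bool) : (s <= s')%N -> (t <= t')%N ->
  (L (pin c j B s t) <= L (pin c j B s' t'))%N.
Proof. by move=> ss tt; apply: monoL => i; rewrite !ffunE; case: ifP => _ //; case: ifP. Qed.

Lemma pin_split c j (B : {set S}) : j \notin B -> {in B, forall i, psi i = psi j} ->
  L (pin c j B true true) -> L (pin c j B false true) || L (pin c j B true false).
Proof.
move=> jB psiB /exists_minimal_one_set [A minA /subsetP Ax].
have /imset_injP psiA : #|psi @: A| == #|A| by rewrite psi_inj_one.
have pinA s t : {in A, forall i, pin c j B s t i = pin c j B true true i} ->
                L (pin c j B s t).
  move=> agree; apply: monotone_true minA.1 => i; rewrite [ind A i]ffunE.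
  by case: (boolP (i \in A)) => // iA; rewrite agree //; move/Ax: iA; rewrite inE => ->.
(* psi is injective on A, so A cannot contain both j and a point of B. *)
have [jA|jA] := boolP (j \in A);
  [rewrite [X in _ || X]pinA ?orbT | rewrite pinA] => // i iA; rewrite !ffunE.
  case: eqP => // /eqP ij; case: ifP => // iB.
  by case/eqP: ij; apply: psiA => //; apply: psiB.
by have /negPf-> : i != j by apply: contraNneq jA => <-.
Qed.

End MonotoneBooleanFunction.

Lemma monotone_dual (S : finType) (L : {ffun S -> bool} -> bool) :
  monotone L -> monotone (dual L).
Proof.
move=> monoL x y xy; have /monoL : forall i, (negc y i <= negc x i)%N.
  by move=> i; rewrite !ffunE; move: (xy i); case: (x i); case: (y i).
by rewrite /dual; case: (L _); case: (L _).
Qed.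

Lemma minimal_one_set_dual (S : finType) (L : {ffun S -> bool} -> bool) (Z : {set S}) :
  minimal_one_set (dual L) Z <-> minimal_zero_set L Z.
Proof.
have one_zero B : one_set (dual L) B <-> zero_set L B.
  rewrite /one_set /zero_set /dual (_ : negc (ind B) = coind B).
    by case: (L _).
  by apply/ffunP => i; rewrite !ffunE.
by split=> [] [/one_zero ZB minZ]; split=> // B BZ /one_zero; apply: minZ.
Qed.

Lemma dual_comp (S T : finType) (L : {ffun S -> bool} -> bool) (psi : S -> T) y :
  dual L (compose_conf psi y) = dual (fun z => L (compose_conf psi z)) y.
Proof. by rewrite /dual; congr (~~ L _); apply/ffunP => i; rewrite !ffunE. Qed.

Lemma set0_le_of_delete (disp : Order.disp_t) (O : porderType disp) (X : finType)
    (F : {set X} -> O) :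
  (forall (U : {set X}) j, j \in U -> (F (U :\ j) <= F U)%O) -> forall U, (F set0 <= F U)%O.
Proof.
move=> F_delete U; have [n] := ubnP #|U|; elim: n U => // n IHn U.
case: (set_0Vmem U) => [-> //|[j jU]]; rewrite (cardsD1 j) jU ltnS => cardU.
exact: le_trans (IHn _ cardU) (F_delete U j jU).
Qed.

Section Interpolation.
Variables (R : numDomainType) (p : R) (S T : finType).
Variables (L : {ffun S -> bool} -> bool) (psi : S -> T).
Hypotheses (p_ge0 : 0 <= p) (p_le1 : p <= 1) (monoL : monotone L).
Hypothesis psi_inj_one : forall A : {set S}, minimal_one_set L A -> #|psi @: A| = #|A|.

(* [inl i] carries X(i) and [inr t] carries Y(t). *)
Definition interp (U : {set S}) (i : S) : S + T := if i \in U then inl i else inr (psi i).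

Definition interp_prob (U : {set S}) : R :=
  expect p (fun y => (L (compose_conf (interp U) y))%:R).

Lemma interp_prob_set0 : interp_prob set0 = iid_prob p (fun y => L (compose_conf psi y)).
Proof.
rewrite iid_probE -(expect_comp_inj _ _ (@inr_inj S T)).
by apply: eq_bigr => y _; congr (_ * (L _)%:R); apply/ffunP => i; rewrite !ffunE /interp inE.
Qed.

Lemma interp_prob_setT : interp_prob setT = iid_prob p L.
Proof.
rewrite iid_probE -(expect_comp_inj _ _ (@inl_inj S T)).
by apply: eq_bigr => y _; congr (_ * (L _)%:R); apply/ffunP => i; rewrite !ffunE /interp inE.
Qed.

Lemma interp_delete (U : {set S}) j y : j \in U ->
  compose_conf (interp (U :\ j)) y
  = compose_conf (interp U) (upd y (inl j) (y (inr (psi j)))).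
Proof.
move=> jU; apply/ffunP => i; rewrite !ffunE /interp !inE.
have [->|ij] := eqVneq i j; rewrite ?jU ?eqxx //=.
by case: (i \in U); rewrite //= (inj_eq (@inl_inj _ _)) (negPf ij).
Qed.

Lemma interp_upd (U : {set S}) j y s t : j \in U ->
  compose_conf (interp U) (upd (upd y (inl j) s) (inr (psi j)) t)
  = pin (compose_conf (interp U) y) j [set i | (i \notin U) && (psi i == psi j)] s t.
Proof.
move=> jU; apply/ffunP => i; rewrite !ffunE inE /interp.
have [->|ij] := eqVneq i j; rewrite ?jU ?eqxx //=.
by case: (i \in U); rewrite //= ?(inj_eq (@inl_inj _ _)) ?(inj_eq (@inr_inj _ _)) (negPf ij).
Qed.

Lemma interp_prob_delete (U : {set S}) j : j \in U -> interp_prob (U :\ j) <= interp_prob U.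
Proof.
move=> jU; rewrite {1}/interp_prob /expect.
under eq_bigr do rewrite interp_delete //.
apply: expect_merge_le => // y; rewrite !interp_upd //.
set B := [set i | _ & _].
have jB : j \notin B by rewrite inE jU.
have psiB : {in B, forall i, psi i = psi j} by move=> i; rewrite inE => /andP[_ /eqP].
have bool_ineq (u v w z : bool) :
  (u -> v || w) -> (z <= v)%N -> (z <= w)%N -> (u + z <= v + w)%N.
  by case: u v w z => [] [] [] [].
rewrite -!natrD ler_nat; apply: bool_ineq; first exact: (pin_split monoL psi_inj_one).
  exact: (pin_mono monoL).
exact: (pin_mono monoL).
Qed.

Lemma iid_prob_comp_le : iid_prob p (fun y => L (compose_conf psi y)) <= iid_prob p L.
Proof.
rewrite -interp_prob_set0 -interp_prob_setT.
exact: (set0_le_of_delete interp_prob_delete).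
Qed.

End Interpolation.

Theorem proposition5 (R : realFieldType) (S T : finType)
    (L : {ffun S -> bool} -> bool) (psi : S -> T) (p : R) :
  monotone L -> 0 <= p -> p <= 1 ->
  ((forall A : {set S}, minimal_one_set L A -> #|psi @: A| = #|A|) ->
     iid_prob p (fun y : {ffun T -> bool} => L (compose_conf psi y))
     <= iid_prob p (fun x : {ffun S -> bool} => L x)) /\
  ((forall Z : {set S}, minimal_zero_set L Z -> #|psi @: Z| = #|Z|) ->
     iid_prob p (fun y : {ffun T -> bool} => L (compose_conf psi y))
     >= iid_prob p (fun x : {ffun S -> bool} => L x)).
Proof.
move=> monoL p_ge0 p_le1; split; first exact: iid_prob_comp_le.
move=> psi_inj_zero.
have q_ge0 : 0 <= 1 - p by rewrite subr_ge0.
have q_le1 : 1 - p <= 1 by rewrite gerBl.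
have := iid_prob_comp_le q_ge0 q_le1 (monotone_dual monoL)
  (fun Z mZ => psi_inj_zero Z ((minimal_one_set_dual L Z).1 mZ)).
have -> : iid_prob (1 - p) (fun y => dual L (compose_conf psi y))
          = 1 - iid_prob p (fun y => L (compose_conf psi y)).
  by rewrite -iid_prob_dual; apply: eq_bigl => y; rewrite dual_comp.
by rewrite iid_prob_dual lerD2l lerN2.
Qed.
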